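(* Let $\xi>0$ be such that $D^TD-\xi^2I$ is nonsingular, let $N$ be a positive integer and let the mesh $\Omega_N=\{\theta_{N,i}: i=-N,\dots,N\}$ satisfy $\theta_{N,-i}=-\theta_{N,i}$ for $i=1,\dots,N$. Then for all $\lambda\in\mathbb{C}$, $\det(\lambda I-\mathcal{L}_\xi^N)=0$ if and only if $\det(-\bar\lambda I-\mathcal{L}_\xi^N)=0$.
   Context: Let $n,m,n_u,n_y$ be positive integers, $A_0,\dots,A_m\in\mathbb{R}^{n\times n}$, $B\in\mathbb{R}^{n\times n_u}$, $C\in\mathbb{R}^{n_y\times n}$, $D\in\mathbb{R}^{n_y\times n_u}$, delays $\tau_1,\dots,\tau_m\ge0$, $\tau_{\max}=\max_i\tau_i>0$. For $\xi>0$ put $D_\xi=D^TD-\xi^2I_{n_u}$, $\tilde D_\xi=DD^T-\xi^2I_{n_y}$, and define $2n\times2n$ matrices $M_0=\begin{bmatrix} A_0-BD_\xi^{-1}D^TC & -BD_\xi^{-1}B^T\\ \xi^2 C^T\tilde D_\xi^{-1}C & -A_0^T+C^TDD_\xi^{-1}B^T\end{bmatrix}$, $M_i=\begin{bmatrix}A_i&0\\0&0\end{bmatrix}$, $M_{-i}=\begin{bmatrix}0&0\\0&-A_i^T\end{bmatrix}$, $1\le i\le m$. A mesh $\Omega_N$ consists of $2N+1$ points $-\tau_{\max}\le\theta_{N,-N}<\dots<\theta_{N,0}=0<\dots<\theta_{N,N}\le\tau_{\max}$. Let $X_N=(\mathbb{C}^{2n})^{2N+1}$ with elements $x=(x_{-N},\dots,x_N)$,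 and let $\mathcal{P}_Nx$ be the unique $\mathbb{C}^{2n}$-valued polynomial of degree $\le 2N$ with $\mathcal{P}_Nx(\theta_{N,i})=x_i$ for all $i$. The matrix $\mathcal{L}_\xi^N:X_N\to X_N$ is defined by $(\mathcal{L}_\xi^Nx)_i=(\mathcal{P}_Nx)'(\theta_{N,i})$ for $i\ne0$ and $(\mathcal{L}_\xi^Nx)_0=M_0\mathcal{P}_Nx(0)+\sum_{i=1}^m\left(M_i\mathcal{P}_Nx(-\tau_i)+M_{-i}\mathcal{P}_Nx(\tau_i)\right)$. *)

From HB Require Import structures.
From mathcomp Require Import all_boot all_order all_algebra.
From mathcomp Require Import complex.
Set Implicit Arguments. Unset Strict Implicit. Unset Printing Implicit Defensive.
Import Order.TTheory GRing.Theory Num.Theory.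
Local Open Scope ring_scope.

Section Defs.
Variable R : rcfType.
Local Notation C := (R[i]).
Definition toC (x : R) : C := Complex x 0.
Definition mxC m k (A : 'M[R]_(m, k)) : 'M[C]_(m, k) := map_mx toC A.

Definition Dxi nu ny (D : 'M[R]_(ny, nu)) (xi : R) : 'M[R]_nu :=
  D^T *m D - (xi ^+ 2)%:M.
Definition Dtxi nu ny (D : 'M[R]_(ny, nu)) (xi : R) : 'M[R]_ny :=
  D *m D^T - (xi ^+ 2)%:M.

Definition M0 n nu ny (A0 : 'M[R]_n) (B : 'M[R]_(n, nu)) (Cm : 'M[R]_(ny, n))
    (D : 'M[R]_(ny, nu)) (xi : R) : 'M[R]_(n + n) :=
  let Di := invmx (Dxi D xi) in
  let Dti := invmx (Dtxi D xi) in
  block_mx (A0 - B *m Di *m D^T *m Cm) (- (B *m Di *m B^T))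
           ((xi ^+ 2) *: (Cm^T *m Dti *m Cm)) (- A0^T + Cm^T *m D *m Di *m B^T).

Definition Mplus n (Ai : 'M[R]_n) : 'M[R]_(n + n) := block_mx Ai 0 0 0.
Definition Mminus n (Ai : 'M[R]_n) : 'M[R]_(n + n) := block_mx 0 0 0 (- Ai^T).

Definition taumax m (tau : 'I_m -> R) : R := \big[Num.max/0]_(i < m) tau i.

(* Mesh Omega_N: index k : 'I_(N+N).+1 stands for i = k - N, so
   theta k = theta_{N, k-N}; the middle index is N (i = 0). *)
Definition mid N : 'I_(N + N).+1 := inord N.

Definition is_mesh N (tm : R) (theta : 'I_(N + N).+1 -> R) : Prop :=
  [/\ forall k l : 'I_(N + N).+1, (k < l)%N -> theta k < theta l,
      theta (mid N) = 0 &
      forall k, - tm <= theta k <= tm].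

Definition lagr N (theta : 'I_(N + N).+1 -> R) (j : 'I_(N + N).+1) : {poly C} :=
  \prod_(k < (N + N).+1 | k != j)
     ((toC (theta j) - toC (theta k))^-1 *: ('X - (toC (theta k))%:P)).

(* X_N = (C^{2n})^{2N+1}, an element x is stored as a matrix whose k-th row is
   x_{k-N} in C^{2n} (as a row vector).
   P_N x = the C^{2n}-valued interpolating polynomial, stored componentwise. *)
Definition PN N n2 (theta : 'I_(N + N).+1 -> R) (x : 'M[C]_((N + N).+1, n2))
  : 'rV[{poly C}]_n2 :=
  \row_c \sum_(j < (N + N).+1) x j c *: lagr theta j.

Definition PNeval N n2 theta (x : 'M[C]_((N + N).+1, n2)) (t : C) : 'rV[C]_n2 :=
  \row_c ((PN theta x) 0 c).[t].
Definition PNderiv N n2 theta (x : 'M[C]_((N + N).+1, n2)) (t : C) : 'rV[C]_n2 :=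
  \row_c ((PN theta x) 0 c)^`().[t].

Definition LxiN_op n nu ny m N (A0 : 'M[R]_n) (As : 'I_m -> 'M[R]_n)
    (B : 'M[R]_(n, nu)) (Cm : 'M[R]_(ny, n)) (D : 'M[R]_(ny, nu))
    (tau : 'I_m -> R) (theta : 'I_(N + N).+1 -> R) (xi : R)
    (x : 'M[C]_((N + N).+1, n + n)) : 'M[C]_((N + N).+1, n + n) :=
  \matrix_(k < (N + N).+1)
    if k == mid N then
      (mxC (M0 A0 B Cm D xi) *m (PNeval theta x 0)^T
       + \sum_(i < m) (mxC (Mplus (As i)) *m (PNeval theta x (toC (- tau i)))^T
                       + mxC (Mminus (As i)) *m (PNeval theta x (toC (tau i)))^T))^T
    else PNderiv theta x (toC (theta k)).

Definition LxiN n nu ny m N A0 As B Cm D tau theta xi :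
  'M[C]_((N + N).+1 * (n + n)) :=
  lin_mx (@LxiN_op n nu ny m N A0 As B Cm D tau theta xi).

End Defs.

From HB Require Import structures.
From mathcomp Require Import all_boot all_order all_algebra.
From mathcomp Require Import complex zify.
Set Implicit Arguments. Unset Strict Implicit. Unset Printing Implicit Defensive.
Import Order.TTheory GRing.Theory Num.Theory.
Local Open Scope ring_scope.

(** The coefficient matrices are real and Hamiltonian for J = [0 I; -I 0]
   (M_0^T = -J^T M_0 J and M_i^T = -J^T M_{-i} J), and a symmetric mesh makes
   the Lagrange basis symmetric under t |-> -t. Hence x |-> (conj(x_{-k}) J)_k
   maps an eigenvector of L for lam to an eigenvector for -conj(lam) of the
   operator L' in which every coefficient matrix is transposed.

   L and L' have the same spectrum. All rows of both except the middle one
   apply the differentiation matrix G; the middle row is sum_j H_j x_j for L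
   and sum_j H_j^T x_j for L'. After a shift by lam it suffices to compare
   kernels. The columns of a nonzero kernel vector x are annihilated by the
   non-middle rows of G. If x = c v has rank one, then P = sum_j c_j H_j is
   singular, hence so is P^T. Otherwise x has two independent columns c, d,
   and the middle-row condition on c l + d u is q equations in 2q unknowns. *)

(* Lets [/=] unfold canonical-structure wrappers around [conjc] without
   computing conjugates of explicit complex numbers. *)
Local Arguments conjc : simpl never.

Section LinearAlgebra.
Variable F : fieldType.

Lemma row_freeNP m n (A : 'M[F]_(m, n)) :
  reflect (exists2 v : 'rV_m, v != 0 & v *m A = 0) (~~ row_free A).
Proof.
rewrite -kermx_eq0; apply: (iffP rowV0Pn) => -[v].
  by move=> /sub_kermxP vA nzv; exists v.
by move=> nzv /sub_kermxP vA; exists v.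
Qed.

Lemma row_free_tr n (A : 'M[F]_n) : row_free A^T = row_free A.
Proof. by rewrite !row_free_unit unitmx_tr. Qed.

Lemma eq0_cramer2 q (l u : 'rV[F]_q) (a1 b1 a2 b2 : F) :
  a1 * b2 - a2 * b1 != 0 -> a1 *: l + b1 *: u = 0 -> a2 *: l + b2 *: u = 0 -> l = 0.
Proof.
move=> nz /eqP; rewrite addr_eq0 => /eqP e1 /eqP; rewrite addr_eq0 => /eqP e2.
apply: (scalerI nz); rewrite scaler0 scalerBl.
rewrite [a1 * b2]mulrC [a2 * b1]mulrC -!scalerA e1 e2.
by rewrite !scalerN !scalerA mulrC subrr.
Qed.

Lemma row_col_mul p q (c : 'cV[F]_p) (w : 'rV[F]_q) j : row j (c *m w) = c j 0 *: w.
Proof. by apply/rowP => e; rewrite !mxE big_ord1. Qed.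

Lemma det_lin_mx_eq0 m n (f : {linear 'M[F]_(m, n) -> 'M[F]_(m, n)}) (lam : F) :
  \det (lam%:M - lin_mx f) = 0 <-> exists2 x, x != 0 & f x = lam *: x.
Proof.
split.
  move/eqP/det0P => [u nzu]; rewrite mulmxBr mul_mx_scalar => /eqP.
  rewrite subr_eq0 => /eqP uf; exists (vec_mx u); last by rewrite -mx_rV_lin -uf linearZ.
  by apply: contra nzu => /eqP u0; rewrite -[u]vec_mxK u0 linear0.
move=> [x nzx fx]; apply/eqP/det0P; exists (mxvec x).
  by apply: contra nzx => /eqP x0; rewrite -[x]mxvecK x0 linear0.
by rewrite mulmxBr mul_mx_scalar mul_vec_lin fx linearZ subrr.
Qed.

Lemma eq_lin_mx m1 n1 m2 n2 (f g : 'M[F]_(m1, n1) -> 'M[F]_(m2, n2)) :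
  f =1 g -> lin_mx f = lin_mx g.
Proof. by move=> fg; apply/matrixP => i j; rewrite !mxE /= fg. Qed.

End LinearAlgebra.

Section BorderedOperator.
Variables (F : fieldType) (p q : nat) (r : 'I_p) (G : 'M[F]_p).
Implicit Types (H : 'I_p -> 'M[F]_q) (x : 'M[F]_(p, q)).

Definition bordered_op H x : 'M[F]_(p, q) :=
  \matrix_k if k == r then (\sum_j H j *m (row j x)^T)^T else row k (G *m x).

Lemma bordered_op_is_linear H : linear (bordered_op H).
Proof.
move=> a x y; apply/row_matrixP => k; rewrite linearD linearZ /= !rowK.
case: ifP => _; last by rewrite mulmxDr -scalemxAr linearD linearZ.
rewrite -linearZ -linearD /= scaler_sumr -big_split; congr (_^T).
by apply: eq_bigr => j _; rewrite linearD linearZ /= linearD linearZ /= mulmxDr scalemxAr.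
Qed.

HB.instance Definition _ H :=
  GRing.isLinear.Build F 'M[F]_(p, q) 'M[F]_(p, q) _ (bordered_op H)
    (bordered_op_is_linear H).

Lemma eq_bordered_op H1 H2 : H1 =1 H2 -> bordered_op H1 =1 bordered_op H2.
Proof.
move=> eH x; apply/row_matrixP => k; rewrite !rowK; case: ifP => // _.
by congr (_^T); apply: eq_bigr => j _; rewrite eH.
Qed.

Lemma bordered_op_eq0 H x :
  bordered_op H x = 0 <->
  (forall k, k != r -> row k (G *m x) = 0) /\ \sum_j H j *m (row j x)^T = 0.
Proof.
split=> [/row_matrixP x0 | [xG xH]].
  split=> [k kr | ]; first by have := x0 k; rewrite rowK (negbTE kr) row0.
  by have := x0 r; rewrite rowK eqxx row0 => /(congr1 trmx); rewrite trmxK trmx0.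
apply/row_matrixP => k; rewrite rowK row0.
by case: eqVneq => [_ | kr]; [rewrite xH trmx0 | exact: xG].
Qed.

Lemma bordered_op_col_mul H (c : 'cV_p) (w : 'rV_q) :
  (forall k, k != r -> (G *m c) k 0 = 0) ->
  bordered_op H (c *m w) = delta_mx r 0 *m w *m (\sum_j c j 0 *: H j)^T.
Proof.
move=> cG; apply/row_matrixP => k; rewrite rowK -mulmxA.
rewrite [row k (delta_mx _ _ *m _)]row_col_mul mxE andbT.
case: eqP => [_ | /eqP kr].
  rewrite scale1r -[RHS]trmxK trmx_mul trmxK mulmx_suml.
  congr trmx; apply: eq_bigr => j _.
  by rewrite row_col_mul linearZ /= -scalemxAr scalemxAl.
by rewrite mulmxA row_col_mul cG // !scale0r.
Qed.

End BorderedOperator.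

Section BorderedKernel.
Variables (F : fieldType) (p q : nat) (r : 'I_p) (G : 'M[F]_p).
Implicit Type H : 'I_p -> 'M[F]_q.

Lemma bordered_op_ker_col H x a : bordered_op r G H x = 0 ->
  forall k, k != r -> (G *m col a x) k 0 = 0.
Proof.
move=> /bordered_op_eq0 [xG _] k kr; have /rowP/(_ a) := xG k kr.
by rewrite !mxE => xka; rewrite -[RHS]xka; apply: eq_bigr => j _; rewrite mxE.
Qed.

Lemma sum_scale_tr H (c : 'cV[F]_p) : \sum_j c j 0 *: (H j)^T = (\sum_j c j 0 *: H j)^T.
Proof. by rewrite linear_sum; apply: eq_bigr => j _; rewrite linearZ. Qed.

Lemma bordered_op_ker_pair H (c d : 'cV_p) i0 i : (0 < q)%N ->
  (forall k, k != r -> (G *m c) k 0 = 0) -> (forall k, k != r -> (G *m d) k 0 = 0) ->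
  c i0 0 * d i 0 - c i 0 * d i0 0 != 0 ->
  exists2 y, y != 0 & bordered_op r G H y = 0.
Proof.
move=> q_gt0 cG dG minor.
pose P1 := \sum_j c j 0 *: H j; pose P2 := \sum_j d j 0 *: H j.
have [z nz_z zP] : exists2 z : 'rV_(q + q), z != 0 & z *m col_mx P1^T P2^T = 0.
  by apply/row_freeNP; rewrite /row_free; have := rank_leq_col (col_mx P1^T P2^T); lia.
rewrite -[z]hsubmxK mul_row_col in nz_z zP.
set l := lsubmx z in nz_z zP; set u := rsubmx z in nz_z zP.
exists (c *m l + d *m u); last first.
  by rewrite linearD /= !bordered_op_col_mul // -!mulmxA -mulmxDr zP mulmx0.
apply: contra nz_z => /eqP y0.
have yrow k : c k 0 *: l + d k 0 *: u = 0.
  by have := congr1 (row k) y0; rewrite linearD /= !row_col_mul row0.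
have l0 : l = 0 := eq0_cramer2 minor (yrow i0) (yrow i).
have u0 : u = 0.
  apply: (eq0_cramer2 (u := l) (a1 := d i0 0) (b1 := c i0 0) (a2 := d i 0) (b2 := c i 0)).
  - by rewrite -oppr_eq0 opprB [d i0 0 * _]mulrC [d i 0 * _]mulrC.
  - by rewrite addrC yrow.
  - by rewrite addrC yrow.
by rewrite l0 u0 row_mx0.
Qed.

Lemma bordered_op_ker_rank1_tr H (c : 'cV_p) (v : 'rV_q) :
  (forall k, k != r -> (G *m c) k 0 = 0) -> c != 0 -> v != 0 ->
  bordered_op r G H (c *m v) = 0 ->
  exists2 y, y != 0 & bordered_op r G (fun j => (H j)^T) y = 0.
Proof.
move=> cG /matrix0Pn [i0 [j0 nz_c]] nz_v.
rewrite [j0]ord1 in nz_c.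
rewrite bordered_op_col_mul // => /(congr1 (row r)); rewrite -mulmxA row_col_mul mxE !eqxx.
rewrite scale1r row0 => vP.
have [w nz_w wP] : exists2 w : 'rV_q, w != 0 & w *m \sum_j c j 0 *: H j = 0.
  by apply/row_freeNP; rewrite -row_free_tr; apply/row_freeNP; exists v.
exists (c *m w).
  apply: contra nz_w => /eqP /(congr1 (row i0)); rewrite row_col_mul row0.
  by move/eqP; rewrite scaler_eq0 (negbTE nz_c).
by rewrite bordered_op_col_mul // sum_scale_tr trmxK -mulmxA wP mulmx0.
Qed.

Lemma bordered_op_ker_tr H :
  (exists2 x, x != 0 & bordered_op r G H x = 0) ->
  exists2 y, y != 0 & bordered_op r G (fun j => (H j)^T) y = 0.
Proof.
move=> [x /matrix0Pn [i0 [a nz_x]] xH]; have cG b := bordered_op_ker_col b xH.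
have [/existsP [i /existsP [b minor]] | /existsPn rank1] :=
  boolP [exists i, exists b, x i0 a * x i b - x i a * x i0 b != 0].
  apply: (bordered_op_ker_pair _ (c := col a x) (d := col b x) (i0 := i0) (i := i)).
  - by have := ltn_ord a; lia.
  - exact: cG.
  - exact: cG.
  by rewrite !mxE.
pose v := (x i0 a)^-1 *: row i0 x.
have x_cv : x = col a x *m v.
  apply/matrixP => i b; rewrite !mxE big_ord1 !mxE; apply: (mulfI nz_x).
  have /existsPn/(_ b) := rank1 i; rewrite negbK subr_eq0 => /eqP ->.
  by rewrite mulrCA mulVKf.
apply: (bordered_op_ker_rank1_tr (v := v) (cG a)); last by rewrite -x_cv.
- by apply/matrix0Pn; exists i0, 0; rewrite mxE.
- by apply/rV0Pn; exists a; rewrite !mxE mulVf ?oner_neq0.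
Qed.

End BorderedKernel.

Section BorderedSpectrum.
Variables (F : fieldType) (p q : nat) (r : 'I_p) (G : 'M[F]_p).
Implicit Types (H : 'I_p -> 'M[F]_q) (x : 'M[F]_(p, q)).

Lemma bordered_op_shift H (lam : F) x :
  bordered_op r G H x - lam *: x =
  bordered_op r (G - lam%:M) (fun j => H j - (lam *+ (j == r))%:M) x.
Proof.
apply/row_matrixP => k; rewrite linearB linearZ /= !rowK.
case: eqP => [-> | _]; last by rewrite mulmxBl mul_scalar_mx [RHS]linearB /= [in RHS]linearZ.
rewrite -[lam *: _]trmxK -linearZ -linearB /=; congr trmx.
under [in RHS]eq_bigr do rewrite mulmxBl.
rewrite sumrB; congr (_ - _).
rewrite (bigD1 r) //= big1 => [|j /negbTE jr]; last by rewrite jr mulr0n raddf0 mul0mx.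
by rewrite addr0 eqxx mulr1n mul_scalar_mx !linearZ.
Qed.

Lemma bordered_op_eigen_tr H (lam : F) :
  (exists2 x, x != 0 & bordered_op r G H x = lam *: x) ->
  exists2 y, y != 0 & bordered_op r G (fun j => (H j)^T) y = lam *: y.
Proof.
move=> [x nz_x xH].
have [|y nz_y yH] :=
  @bordered_op_ker_tr F p q r (G - lam%:M) (fun j => H j - (lam *+ (j == r))%:M).
  by exists x; rewrite // -bordered_op_shift xH subrr.
exists y => //; apply/eqP; rewrite -subr_eq0 bordered_op_shift -yH; apply/eqP.
by apply: eq_bordered_op => j; rewrite linearB /= tr_scalar_mx.
Qed.

End BorderedSpectrum.

Section MapBorderedOperator.
Variables (F : fieldType) (f : {rmorphism F -> F}) (p q : nat) (r : 'I_p).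

Lemma map_bordered_op (G : 'M[F]_p) (H : 'I_p -> 'M[F]_q) (x : 'M[F]_(p, q)) :
  map_mx f (bordered_op r G H x) =
  bordered_op r (map_mx f G) (fun j => map_mx f (H j)) (map_mx f x).
Proof.
apply/row_matrixP => k; rewrite -map_row !rowK; case: ifP => _.
  rewrite -map_trmx raddf_sum; congr trmx; apply: eq_bigr => j _.
  by rewrite /= map_mxM -map_trmx map_row.
by rewrite map_row map_mxM.
Qed.

End MapBorderedOperator.

Section Complexification.
Variable R : rcfType.

Lemma toCE (a : R) : toC a = (a%:C)%C. Proof. by []. Qed.

Lemma toCN (a : R) : toC (- a) = - toC a.
Proof. by rewrite !toCE rmorphN. Qed.

Lemma mxCE m k (M : 'M[R]_(m, k)) : mxC M = map_mx (real_complex R) M.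
Proof. by []. Qed.

Lemma map_conjc_mxC m k (M : 'M[R]_(m, k)) : map_mx conjc (mxC M) = mxC M.
Proof. by apply/matrixP => i j; rewrite !mxE conjc_real. Qed.

Lemma mxC_orth n (J : 'M[R]_n) : J *m J^T = 1%:M -> mxC J *m (mxC J)^T = 1%:M.
Proof. by rewrite !mxCE map_trmx -map_mxM => ->; rewrite map_scalar_mx rmorph1. Qed.

Lemma mxC_hamiltonian n (J K K' : 'M[R]_n) : K^T = - (J^T *m K' *m J) ->
  (mxC K)^T = - ((mxC J)^T *m mxC K' *m mxC J).
Proof. by rewrite !mxCE !map_trmx -!map_mxM -map_mxN => <-. Qed.

End Complexification.

Section Lagrange.
Variables (R : rcfType) (N : nat).
Local Notation C := R[i].
Local Notation p := (N + N).+1.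
Variable theta : 'I_p -> R.

Lemma lagr_real j : map_poly conjc (lagr theta j) = lagr theta j.
Proof.
rewrite /lagr rmorph_prod /=; apply: eq_bigr => k _.
by rewrite map_polyZ map_polyXsubC /= !toCE -rmorphB -fmorphV /= !conjc_real.
Qed.

Hypothesis theta_inj : injective theta.

Lemma lagr_node j k : (lagr theta j).[toC (theta k)] = (j == k)%:R.
Proof.
have node_neq i l : i != l -> toC (theta i) - toC (theta l) != 0.
  by move=> il; rewrite subr_eq0 !toCE (inj_eq (@complexI R)) (inj_eq theta_inj).
rewrite /lagr horner_prod; case: eqVneq => [<- | jk].
  by rewrite big1 // => i ij; rewrite hornerZ !hornerE mulVf // node_neq // eq_sym.
by rewrite (bigD1 k) 1?eq_sym //= hornerZ !hornerE subrr mulr0 mul0r.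
Qed.

Lemma size_lagr j : (size (lagr theta j) <= p)%N.
Proof.
apply: leq_trans (size_poly_prod_leq _ _) _.
rewrite (eq_bigr (fun _ => 2%N)) => [|i ij]; last first.
  rewrite size_scale ?size_XsubC // invr_eq0 subr_eq0 !toCE (inj_eq (@complexI R)).
  by rewrite (inj_eq theta_inj) eq_sym.
by rewrite sum_nat_const cardC1 card_ord; lia.
Qed.

Lemma eq_poly_nodes (P Q : {poly C}) : (size P <= p)%N -> (size Q <= p)%N ->
  (forall k, P.[toC (theta k)] = Q.[toC (theta k)]) -> P = Q.
Proof.
move=> sP sQ PQ; apply/eqP; rewrite -subr_eq0; apply/eqP.
apply: (@roots_geq_poly_eq0 _ _ [seq toC (theta k) | k <- enum 'I_p]).
- by apply/allP => t /mapP [k _ ->]; rewrite /root hornerD hornerN PQ subrr.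
- by rewrite map_inj_uniq ?enum_uniq // => a b /(@complexI R) /theta_inj.
rewrite size_map size_enum_ord.
by apply: leq_trans (size_polyD _ _) _; rewrite size_polyN geq_max sP.
Qed.

Hypothesis theta_sym : forall k, theta (rev_ord k) = - theta k.

Lemma lagr_rev j : lagr theta (rev_ord j) = lagr theta j \Po (- 'X).
Proof.
apply: eq_poly_nodes.
- exact: size_lagr.
- by rewrite size_comp_poly2 ?size_lagr // size_polyN size_polyX.
move=> k; rewrite horner_comp hornerN hornerX.
have -> : - toC (theta k) = toC (theta (rev_ord k)) by rewrite theta_sym toCN.
by rewrite !lagr_node -(inj_eq rev_ord_inj) rev_ordK.
Qed.

Lemma horner_lagr_rev j t : (lagr theta (rev_ord j)).[t] = (lagr theta j).[- t].
Proof. by rewrite lagr_rev horner_comp hornerN hornerX. Qed.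

Lemma horner_deriv_lagr_rev j t :
  (lagr theta (rev_ord j))^`().[t] = - (lagr theta j)^`().[- t].
Proof.
rewrite lagr_rev deriv_comp derivN derivX hornerM horner_comp !hornerN hornerX.
by rewrite hornerC mulrN1.
Qed.

End Lagrange.

Section CollocationOperator.
Variables (R : rcfType) (N q m : nat).
Local Notation C := R[i].
Local Notation p := (N + N).+1.
Variables (theta : 'I_p -> R) (tau : 'I_m -> R).
Implicit Types (Kp Km : 'I_m -> 'M[C]_q) (x : 'M[C]_(p, q)).

(* [LxiN_op] with the coefficient matrices abstracted; the two are convertible. *)
Definition colloc_op (K0 : 'M[C]_q) Kp Km x : 'M[C]_(p, q) :=
  \matrix_(k < p)
    if k == mid N then
      (K0 *m (PNeval theta x 0)^T
       + \sum_(i < m) (Kp i *m (PNeval theta x (toC (- tau i)))^T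
                       + Km i *m (PNeval theta x (toC (tau i)))^T))^T
    else PNderiv theta x (toC (theta k)).

Definition deriv_mx : 'M[C]_p := \matrix_(k, j) (lagr theta j)^`().[toC (theta k)].

Definition mid_coef (K0 : 'M[C]_q) Kp Km j : 'M[C]_q :=
  (lagr theta j).[0] *: K0 + \sum_i ((lagr theta j).[toC (- tau i)] *: Kp i
                                   + (lagr theta j).[toC (tau i)] *: Km i).

Lemma PNevalE x t : PNeval theta x t = \sum_j (lagr theta j).[t] *: row j x.
Proof.
apply/rowP => c; rewrite /PNeval /PN !mxE horner_sum summxE.
by apply: eq_bigr => j _; rewrite hornerZ !mxE mulrC.
Qed.

Lemma PNderivE x t : PNderiv theta x t = \sum_j (lagr theta j)^`().[t] *: row j x.
Proof.
apply/rowP => c; rewrite /PNderiv /PN !mxE raddf_sum horner_sum summxE.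
by apply: eq_bigr => j _; rewrite /= derivZ hornerZ !mxE mulrC.
Qed.

Lemma mul_PNeval (K : 'M[C]_q) x t :
  K *m (PNeval theta x t)^T = \sum_j (lagr theta j).[t] *: (K *m (row j x)^T).
Proof.
rewrite PNevalE linear_sum mulmx_sumr; apply: eq_bigr => j _.
by rewrite linearZ /= scalemxAr.
Qed.

Lemma colloc_opE (K0 : 'M[C]_q) Kp Km :
  colloc_op K0 Kp Km =1 bordered_op (mid N) deriv_mx (mid_coef K0 Kp Km).
Proof.
move=> x; apply/row_matrixP => k; rewrite !rowK; case: ifP => _.
  congr trmx; under [RHS]eq_bigr do rewrite mulmxDl mulmx_suml.
  rewrite mul_PNeval [RHS]big_split /=; congr (_ + _).
    by apply: eq_bigr => j _; rewrite scalemxAl.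
  rewrite [RHS]exchange_big /=; apply: eq_bigr => i _.
  rewrite !mul_PNeval -big_split /=; apply: eq_bigr => j _.
  by rewrite mulmxDl -!scalemxAl.
rewrite row_mul mulmx_sum_row PNderivE; apply: eq_bigr => j _.
by rewrite !mxE.
Qed.

Lemma mid_coef_tr (K0 : 'M[C]_q) Kp Km j :
  mid_coef K0^T (fun i => (Kp i)^T) (fun i => (Km i)^T) j = (mid_coef K0 Kp Km j)^T.
Proof.
rewrite /mid_coef linearD linear_sum /= linearZ; congr (_ + _).
by apply: eq_bigr => i _; rewrite linearD /= !linearZ.
Qed.

Lemma colloc_op_tr (K0 : 'M[C]_q) Kp Km :
  colloc_op K0^T (fun i => (Kp i)^T) (fun i => (Km i)^T) =1
  bordered_op (mid N) deriv_mx (fun j => (mid_coef K0 Kp Km j)^T).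
Proof. by move=> x; rewrite colloc_opE; apply: eq_bordered_op => j; rewrite mid_coef_tr. Qed.

Lemma det_colloc_op_eq0 (K0 : 'M[C]_q) Kp Km lam :
  \det (lam%:M - lin_mx (colloc_op K0 Kp Km)) = 0 <->
  exists2 x, x != 0 & colloc_op K0 Kp Km x = lam *: x.
Proof.
rewrite (eq_lin_mx (colloc_opE K0 Kp Km)) det_lin_mx_eq0.
by split=> -[x nz_x xE]; exists x => //=; rewrite -?xE colloc_opE.
Qed.

End CollocationOperator.

Section ConjugateEigenvector.
Variables (R : rcfType) (N q m : nat).
Local Notation C := R[i].
Local Notation p := (N + N).+1.
Variables (theta : 'I_p -> R) (tau : 'I_m -> R).
Variables (K0 : 'M[C]_q) (Kp Km : 'I_m -> 'M[C]_q).
Hypotheses (K0_real : map_mx conjc K0 = K0)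
  (Kp_real : forall i, map_mx conjc (Kp i) = Kp i)
  (Km_real : forall i, map_mx conjc (Km i) = Km i).

Lemma conjc_horner_lagr j (t : R) :
  conjc (lagr theta j).[toC t] = (lagr theta j).[toC t].
Proof. by rewrite -horner_map lagr_real /= toCE conjc_real. Qed.

Lemma conjc_horner_deriv_lagr j (t : R) :
  conjc (lagr theta j)^`().[toC t] = (lagr theta j)^`().[toC t].
Proof. by rewrite -horner_map -deriv_map lagr_real /= toCE conjc_real. Qed.

Lemma map_conjc_deriv_mx : map_mx conjc (deriv_mx theta) = deriv_mx theta.
Proof. by apply/matrixP => k j; rewrite !mxE conjc_horner_deriv_lagr. Qed.

Lemma map_conjc_mid_coef j :
  map_mx conjc (mid_coef theta tau K0 Kp Km j) = mid_coef theta tau K0 Kp Km j.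
Proof.
have conjc_lagr0 : conjc (lagr theta j).[0] = (lagr theta j).[0] := conjc_horner_lagr j 0.
rewrite /mid_coef map_mxD map_mxZ raddf_sum /= K0_real conjc_lagr0.
congr (_ + _); apply: eq_bigr => i _.
by rewrite map_mxD !map_mxZ /= !conjc_horner_lagr Kp_real Km_real.
Qed.

Lemma colloc_op_conjc lam x :
  colloc_op theta tau K0 Kp Km x = lam *: x ->
  colloc_op theta tau K0 Kp Km (map_mx conjc x) = conjc lam *: map_mx conjc x.
Proof.
rewrite !colloc_opE => /(congr1 (map_mx conjc)).
rewrite map_bordered_op map_mxZ map_conjc_deriv_mx => <-.
by apply: eq_bordered_op => j /=; rewrite map_conjc_mid_coef.
Qed.

End ConjugateEigenvector.

Section MirrorEigenvector.
Variables (R : rcfType) (N q m : nat).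
Local Notation C := R[i].
Local Notation p := (N + N).+1.
Variables (theta : 'I_p -> R) (tau : 'I_m -> R).
Hypotheses (theta_inj : injective theta)
  (theta_sym : forall k, theta (rev_ord k) = - theta k).
Variable J : 'M[C]_q.
Hypothesis J_orth : J *m J^T = 1%:M.

Definition mirror (x : 'M[C]_(p, q)) : 'M[C]_(p, q) :=
  \matrix_k (row (rev_ord k) x *m J).

Lemma mirror_eq0 x : (mirror x == 0) = (x == 0).
Proof.
apply/eqP/eqP => [/row_matrixP x0 | ->]; last by apply/row_matrixP => k; rewrite rowK !row0 mul0mx.
apply/row_matrixP => k; have := x0 (rev_ord k).
by rewrite rowK rev_ordK !row0 => /(congr1 (mulmx^~ J^T)); rewrite -mulmxA J_orth mulmx1 mul0mx.
Qed.

Lemma PNeval_mirror x t : PNeval theta (mirror x) t = PNeval theta x (- t) *m J.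
Proof.
rewrite !PNevalE mulmx_suml (reindex_inj rev_ord_inj) /=.
by apply: eq_bigr => j _; rewrite rowK rev_ordK horner_lagr_rev // scalemxAl.
Qed.

Lemma PNderiv_mirror x t : PNderiv theta (mirror x) t = - (PNderiv theta x (- t) *m J).
Proof.
rewrite !PNderivE mulmx_suml -sumrN (reindex_inj rev_ord_inj) /=.
by apply: eq_bigr => j _; rewrite rowK rev_ordK horner_deriv_lagr_rev // scaleNr scalemxAl.
Qed.

Lemma rev_mid : rev_ord (mid N) = mid N.
Proof. by apply/val_inj; rewrite /= /mid inordK; lia. Qed.

Variables (K0 K0' : 'M[C]_q) (Kp Km Kp' Km' : 'I_m -> 'M[C]_q).
Hypotheses (K0_mirror : K0' = - (J^T *m K0 *m J))
  (Kp_mirror : forall i, Kp' i = - (J^T *m Km i *m J))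
  (Km_mirror : forall i, Km' i = - (J^T *m Kp i *m J)).

Lemma mul_PNeval_mirror (K : 'M[C]_q) x t :
  - (J^T *m K *m J) *m (PNeval theta (mirror x) t)^T
  = - (J^T *m (K *m (PNeval theta x (- t))^T)).
Proof.
by rewrite PNeval_mirror trmx_mul mulNmx !mulmxA -(mulmxA _ J) J_orth mulmx1.
Qed.

Lemma colloc_op_mirror lam x :
  colloc_op theta tau K0 Kp Km x = lam *: x ->
  colloc_op theta tau K0' Kp' Km' (mirror x) = - lam *: mirror x.
Proof.
move=> xE; have xEk k : row k (colloc_op theta tau K0 Kp Km x) = lam *: row k x.
  by rewrite xE linearZ.
apply/row_matrixP => k; rewrite linearZ /= !rowK.
case: eqP => [-> | /eqP k_mid].
  have := xEk (mid N); rewrite rowK eqxx => /(canRL (@trmxK _ _ _)) xE_mid.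
  rewrite rev_mid K0_mirror mul_PNeval_mirror oppr0.
  under eq_bigr do rewrite Kp_mirror Km_mirror !mul_PNeval_mirror toCN opprK -toCN.
  under eq_bigr do rewrite -opprD addrC -mulmxDr.
  rewrite sumrN -mulmx_sumr -opprD -mulmxDr xE_mid.
  by rewrite linearN /= trmx_mul !trmxK -scalemxAl scaleNr.
have rev_k_mid : rev_ord k != mid N by rewrite -rev_mid (inj_eq rev_ord_inj).
rewrite PNderiv_mirror -toCN -theta_sym.
by have := xEk (rev_ord k); rewrite rowK (negbTE rev_k_mid) => ->; rewrite -scalemxAl scaleNr.
Qed.

End MirrorEigenvector.

Section SpectralSymmetry.
Variables (R : rcfType) (N q m : nat).
Local Notation C := R[i].
Local Notation p := (N + N).+1.
Variables (theta : 'I_p -> R) (tau : 'I_m -> R).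
Hypotheses (theta_inj : injective theta)
  (theta_sym : forall k, theta (rev_ord k) = - theta k).
Variable J : 'M[C]_q.
Hypothesis J_orth : J *m J^T = 1%:M.
Variables (K0 : 'M[C]_q) (Kp Km : 'I_m -> 'M[C]_q).
Hypotheses (K0_real : map_mx conjc K0 = K0)
  (Kp_real : forall i, map_mx conjc (Kp i) = Kp i)
  (Km_real : forall i, map_mx conjc (Km i) = Km i).
Hypotheses (K0_ham : K0^T = - (J^T *m K0 *m J))
  (Kp_ham : forall i, (Kp i)^T = - (J^T *m Km i *m J))
  (Km_ham : forall i, (Km i)^T = - (J^T *m Kp i *m J)).

Lemma colloc_op_eigen_sym lam :
  (exists2 x, x != 0 & colloc_op theta tau K0 Kp Km x = lam *: x) ->
  exists2 y, y != 0 & colloc_op theta tau K0 Kp Km y = - conjc lam *: y.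
Proof.
move=> [x nz_x xE].
have [|y nz_y yE] := bordered_op_eigen_tr (r := mid N) (G := deriv_mx theta)
  (H := fun j => (mid_coef theta tau K0 Kp Km j)^T) (lam := - conjc lam).
  exists (mirror J (map_mx conjc x)); first by rewrite mirror_eq0 // map_mx_eq0.
  rewrite -colloc_op_tr.
  apply: (colloc_op_mirror theta_inj theta_sym J_orth K0_ham Kp_ham Km_ham).
  exact: colloc_op_conjc.
by exists y; rewrite // colloc_opE -yE; apply: eq_bordered_op => j; rewrite trmxK.
Qed.

End SpectralSymmetry.

Section Hamiltonian.
Variables (R : comPzRingType) (n : nat).

Definition symp : 'M[R]_(n + n) := block_mx 0 1%:M (- 1%:M) 0.

Lemma symp_orth : symp *m symp^T = 1%:M.
Proof.
rewrite /symp tr_block_mx mulmx_block !trmx0 !linearN /= !tr_scalar_mx.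
by rewrite !mul0mx !mulmx0 !mul1mx !addr0 !add0r oppr0 mulNmx mul1mx opprK scalar_mx_block.
Qed.

Lemma symp_conj_block (a b c d : 'M[R]_n) :
  - (symp^T *m block_mx a b c d *m symp) = block_mx (- d) c b (- a).
Proof.
rewrite /symp tr_block_mx !trmx0 !linearN /= !tr_scalar_mx !mulmx_block.
rewrite !mul0mx !mulmx0 !mul1mx !mulmx1 !addr0 !add0r !mulNmx !mulmxN !mul1mx !mulmx1.
by rewrite opp_block_mx !opprK.
Qed.

End Hamiltonian.

Arguments symp {R n}.

Section DelayHamiltonian.
Variables (R : rcfType) (n nu ny : nat).

Lemma Mplus_hamiltonian (A : 'M[R]_n) : (Mplus A)^T = - (symp^T *m Mminus A *m symp).
Proof. by rewrite symp_conj_block tr_block_mx !trmx0 !oppr0 opprK. Qed.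

Lemma Mminus_hamiltonian (A : 'M[R]_n) : (Mminus A)^T = - (symp^T *m Mplus A *m symp).
Proof. by rewrite symp_conj_block tr_block_mx !trmx0 oppr0 linearN /= trmxK. Qed.

Variables (A0 : 'M[R]_n) (B : 'M[R]_(n, nu)) (Cm : 'M[R]_(ny, n)) (D : 'M[R]_(ny, nu)) (xi : R).

Lemma tr_invmx_Dxi : (invmx (Dxi D xi))^T = invmx (Dxi D xi).
Proof. by rewrite trmx_inv /Dxi linearB /= trmx_mul trmxK tr_scalar_mx. Qed.

Lemma tr_invmx_Dtxi : (invmx (Dtxi D xi))^T = invmx (Dtxi D xi).
Proof. by rewrite trmx_inv /Dtxi linearB /= trmx_mul trmxK tr_scalar_mx. Qed.

Lemma M0_hamiltonian : (M0 A0 B Cm D xi)^T = - (symp^T *m M0 A0 B Cm D xi *m symp).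
Proof.
rewrite /M0 symp_conj_block tr_block_mx; congr block_mx.
- by rewrite opprD opprK linearB /= !trmx_mul !trmxK tr_invmx_Dxi !mulmxA.
- by rewrite linearZ /= !trmx_mul !trmxK tr_invmx_Dtxi !mulmxA.
- by rewrite linearN /= !trmx_mul !trmxK tr_invmx_Dxi !mulmxA.
- by rewrite linearD linearN /= !trmx_mul !trmxK tr_invmx_Dxi !mulmxA opprD opprK.
Qed.

End DelayHamiltonian.

Lemma mesh_inj (R : rcfType) N (tm : R) (theta : 'I_(N + N).+1 -> R) :
  is_mesh tm theta -> injective theta.
Proof.
case=> theta_incr _ _ k l; case: (ltngtP k l) => [kl | lk | /val_inj //].
  by move/eqP; rewrite lt_eqF // theta_incr.
by move/eqP; rewrite gt_eqF // theta_incr.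
Qed.

Theorem proposition2 (R : rcfType) (n nu ny m N : nat)
    (A0 : 'M[R]_n) (As : 'I_m -> 'M[R]_n) (B : 'M[R]_(n, nu))
    (Cm : 'M[R]_(ny, n)) (D : 'M[R]_(ny, nu))
    (tau : 'I_m -> R) (theta : 'I_(N + N).+1 -> R) (xi : R) :
  (0 < n)%N -> (0 < nu)%N -> (0 < ny)%N -> (0 < m)%N -> (0 < N)%N ->
  (forall i, 0 <= tau i) -> 0 < taumax tau ->
  0 < xi -> Dxi D xi \in unitmx ->
  is_mesh (taumax tau) theta ->
  (forall k, theta (rev_ord k) = - theta k) ->
  forall lam : R[i],
    \det (lam%:M - LxiN A0 As B Cm D tau theta xi) = 0 <->
    \det ((- conjc lam)%:M - LxiN A0 As B Cm D tau theta xi) = 0.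
Proof.
move=> _ _ _ _ _ _ _ _ _ /mesh_inj theta_inj theta_sym lam.
pose K0 := mxC (M0 A0 B Cm D xi).
pose Kp i := mxC (Mplus (As i)); pose Km i := mxC (Mminus (As i)).
have eigen_sym := colloc_op_eigen_sym (J := mxC symp) (K0 := K0) (Kp := Kp) (Km := Km)
  theta_inj theta_sym (mxC_orth (symp_orth _ _))
  (map_conjc_mxC _) (fun i => map_conjc_mxC _) (fun i => map_conjc_mxC _)
  (mxC_hamiltonian (M0_hamiltonian _ _ _ _ _))
  (fun i => mxC_hamiltonian (Mplus_hamiltonian _))
  (fun i => mxC_hamiltonian (Mminus_hamiltonian _)).
change (LxiN A0 As B Cm D tau theta xi) with (lin_mx (colloc_op theta tau K0 Kp Km)).
rewrite !det_colloc_op_eq0; split; first exact: eigen_sym.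
by move=> /eigen_sym; rewrite rmorphN /= conjcK opprK.
Qed.
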